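(* Let $T=(V,E)$ be a tree with $\mathrm{pthin}(T)=2$, and let $\sigma$ be an ordering of $V$ and $S=\{V^0,V^1\}$ a partition of $V$ that are strongly consistent. Let $v_0\in V^0$ and $v_1\in V^1$ be adjacent. Let $u$ be a vertex that is before the edge $v_0v_1$ and $w$ a vertex that is after the edge $v_0v_1$. Then every path in $T$ from $u$ to $w$ contains $v_0$ or $v_1$.
   Context: For a graph $G=(V,E)$, a linear ordering $<$ of $V$ and a partition of $V$ into classes are called strongly consistent if for every triple $r<s<t$ of vertices with $rt\in E$: if $r$ and $s$ belong to the same class then $st\in E$, and if $s$ and $t$ belong to the same class then $rs\in E$. The proper thinness $\mathrm{pthin}(G)$ is the minimum $k$ such that some ordering and some partition into $k$ classes are strongly consistent. For adjacent $v_0\in V^0$, $v_1\in V^1$ and a vertex $u\notin\{v_0,v_1\}$: $u$ is before the edge $v_0v_1$ if either ($u\in V^0$ and $u<v_0$) or ($u\in V^1$ and $u<v_1$); $u$ is after the edge $v_0v_1$ if either ($u\in V^0$ and $v_0<u$) or ($u\in V^1$ and $v_1<u$). *)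

From mathcomp Require Import all_boot.
Set Implicit Arguments. Unset Strict Implicit. Unset Printing Implicit Defensive.

Definition simple_graph (T : finType) (e : rel T) : Prop :=
  symmetric e /\ irreflexive e.

Definition has_cycle (T : finType) (e : rel T) : Prop :=
  exists (x : T) (p : seq T),
    [/\ 2 <= size p, uniq (x :: p), path e x p & e (last x p) x].

Definition is_tree (T : finType) (e : rel T) : Prop :=
  [/\ simple_graph e, (forall x y : T, connect e x y) & ~ has_cycle e].

(* A linear ordering of V is given by an injective rank function
   ord : T -> nat (r < s iff ord r < ord s); a partition into classes by a
   class function cls : T -> C. *)
Definition strongly_consistent (T : finType) (e : rel T) (C : eqType)
    (ord : T -> nat) (cls : T -> C) : Prop :=
  forall r s t : T, ord r < ord s -> ord s < ord t -> e r t ->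
    (cls r = cls s -> e s t) /\ (cls s = cls t -> e r s).

Definition pthin_eq (T : finType) (e : rel T) (k : nat) : Prop :=
  (exists (ord : T -> nat) (cls : T -> 'I_k),
      injective ord /\ strongly_consistent e ord cls) /\
  (forall (k' : nat) (ord : T -> nat) (cls : T -> 'I_k'),
      k' < k -> injective ord -> ~ strongly_consistent e ord cls).

(* Partition {V^0, V^1}: cls u = false means u \in V^0, true means u \in V^1. *)
Definition before_edge (T : finType) (ord : T -> nat) (cls : T -> bool)
    (v0 v1 u : T) : Prop :=
  u <> v0 /\ u <> v1 /\
  ((cls u = false /\ ord u < ord v0) \/ (cls u = true /\ ord u < ord v1)).

Definition after_edge (T : finType) (ord : T -> nat) (cls : T -> bool)
    (v0 v1 u : T) : Prop :=
  u <> v0 /\ u <> v1 /\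
  ((cls u = false /\ ord v0 < ord u) \/ (cls u = true /\ ord v1 < ord u)).

From mathcomp Require Import all_boot.
Set Implicit Arguments. Unset Strict Implicit. Unset Printing Implicit Defensive.

(* Call a vertex x preceding if it comes before the endpoint of v0v1 lying in
   its own class.  A path from u to w starts at a preceding vertex and ends at
   a non-preceding one, so if it avoids v0 and v1 it has an edge ab with a
   preceding and b following.  Strong consistency then makes the endpoints of
   the two edges adjacent: if a and b are in the same class c, then a, v_c, b
   is a triangle; otherwise a, b, v_(cls a), v_(cls b) is a 4-cycle.  Either
   way the tree would contain a cycle. *)

Lemma path_exit_edge (T : eqType) (e : rel T) (P : pred T) u p :
  path e u p -> P u -> ~~ P (last u p) ->
  exists a b, [/\ e a b, P a, ~~ P b, a \in u :: p & b \in u :: p].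
Proof.
elim: p u => [|x p IHp] u /=; first by move=> _ ->.
move=> /andP[eux px] Pu Plast; case Px: (P x).
- have [a [b [eab Pa Pb ain bin]]] := IHp x px Px Plast.
  by exists a, b; split; rewrite // in_cons ?ain ?bin orbT.
- by exists u, x; split; rewrite ?Px ?mem_head ?in_cons ?eqxx ?orbT.
Qed.

Section ShortCycles.
Variables (T : finType) (e : rel T).
Hypothesis e_irr : irreflexive e.

Lemma adj_neq x y : e x y -> x != y.
Proof. by apply: contraTneq => ->; rewrite e_irr. Qed.

Lemma triangle_has_cycle a b c : e a b -> e b c -> e c a -> has_cycle e.
Proof.
move=> eab ebc eca; exists a, [:: b; c]; split; rewrite //= ?eab ?ebc //.
by rewrite !inE negb_or (adj_neq eab) (adj_neq ebc) eq_sym (adj_neq eca).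
Qed.

Lemma square_has_cycle a b c d :
  e a b -> e b c -> e c d -> e d a -> a != c -> b != d -> has_cycle e.
Proof.
move=> eab ebc ecd eda ac bd; exists a, [:: b; c; d]; split; rewrite //= ?eab ?ebc ?ecd //.
rewrite !inE !negb_or ac bd (adj_neq eab) (adj_neq ebc) (adj_neq ecd).
by rewrite [a == d]eq_sym (adj_neq eda).
Qed.

End ShortCycles.

Section Crossing.
Variables (T : finType) (e : rel T) (ord : T -> nat) (cls : T -> bool) (v0 v1 : T).

Definition edge_end x := if cls x then v1 else v0.

Definition precedes_edge x := ord x < ord (edge_end x).

Lemma before_edge_precedes u : before_edge ord cls v0 v1 u -> precedes_edge u.
Proof. by case=> _ [_ [[cu lt] | [cu lt]]]; rewrite /precedes_edge /edge_end cu. Qed.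

Lemma after_edge_not_precedes w : after_edge ord cls v0 v1 w -> ~~ precedes_edge w.
Proof.
by case=> _ [_ [[cw lt] | [cw lt]]]; rewrite /precedes_edge /edge_end cw -leqNgt ltnW.
Qed.

Lemma edge_end_mem x : edge_end x \in [:: v0; v1].
Proof. by rewrite /edge_end; case: (cls x); rewrite !inE eqxx ?orbT. Qed.

Hypotheses (e_sym : symmetric e) (e_irr : irreflexive e) (ord_inj : injective ord).
Hypothesis consistent : strongly_consistent e ord cls.
Hypotheses (cls_v0 : cls v0 = false) (cls_v1 : cls v1 = true) (e_v0v1 : e v0 v1).

Lemma ord_neq_lt x y : x != y -> (ord x < ord y) || (ord y < ord x).
Proof. by rewrite -neq_ltn (inj_eq ord_inj). Qed.

(* Each adjacency is one application of strong consistency, to whichever of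
   the two edges spans the middle vertex. *)
Lemma crossing_edges_adjacent x1 y1 x2 y2 :
  e x1 y1 -> e x2 y2 -> cls x1 = cls x2 -> cls y1 = cls y2 ->
  ord x1 < ord x2 -> ord y2 < ord y1 -> x2 != y1 -> x1 != y2 ->
  e x2 y1 /\ e x1 y2.
Proof.
move=> e11 e22 cx cy ltx lty x2y1 x1y2; rewrite e_sym in e22.
split; [case/orP: (ord_neq_lt x2y1) => lt | case/orP: (ord_neq_lt x1y2) => lt].
- exact: (consistent ltx lt e11).1 cx.
- by rewrite e_sym; apply: (consistent lty lt e22).1; rewrite cy.
- exact: (consistent lt lty e11).2 (esym cy).
- by rewrite e_sym; apply: (consistent lt ltx e22).2.
Qed.

Lemma cls_edge_end x : cls (edge_end x) = cls x.
Proof. by rewrite /edge_end; case: (cls x). Qed.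

Lemma edge_ends_adjacent a b : cls a != cls b -> e (edge_end a) (edge_end b).
Proof. by rewrite /edge_end; case: (cls a); case: (cls b); rewrite // e_sym. Qed.

Lemma leaving_edge_has_cycle a b :
  e a b -> a \notin [:: v0; v1] -> b \notin [:: v0; v1] ->
  precedes_edge a -> ~~ precedes_edge b -> has_cycle e.
Proof.
move=> eab a_off b_off a_prec b_not.
have off_end x y : x \notin [:: v0; v1] -> x != edge_end y.
  by move=> x_off; apply: contraNneq x_off => ->; apply: edge_end_mem.
have b_after : ord (edge_end b) < ord b.
  by rewrite ltn_neqAle (inj_eq ord_inj) eq_sym off_end // leqNgt.
have [same | diff] := eqVneq (cls a) (cls b).
- have same_end : edge_end b = edge_end a by rewrite /edge_end same.
  rewrite same_end in b_after.
  have [e_end_b e_a_end] := consistent a_prec b_after eab.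
  have cls_end_a := cls_edge_end a.
  apply: (triangle_has_cycle e_irr (e_a_end (etrans cls_end_a same))
    (e_end_b (esym cls_end_a))).
  by rewrite e_sym.
- have enda_b : edge_end a != b by rewrite eq_sym off_end.
  have [e_enda_b e_a_endb] := crossing_edges_adjacent eab (edge_ends_adjacent diff)
    (esym (cls_edge_end a)) (esym (cls_edge_end b)) a_prec b_after
    enda_b (off_end _ _ a_off).
  apply: (square_has_cycle e_irr eab _ (edge_ends_adjacent diff));
    by rewrite ?off_end // e_sym.
Qed.

End Crossing.

Theorem propositionA4 (T : finType) (e : rel T) (ord : T -> nat)
    (cls : T -> bool) (v0 v1 u w : T) :
  is_tree e -> pthin_eq e 2 ->
  injective ord -> strongly_consistent e ord cls ->
  cls v0 = false -> cls v1 = true -> e v0 v1 ->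
  before_edge ord cls v0 v1 u -> after_edge ord cls v0 v1 w ->
  forall p : seq T, path e u p -> last u p = w -> uniq (u :: p) ->
    (v0 \in u :: p) || (v1 \in u :: p).
Proof.
move=> [[e_sym e_irr] _ acyclic] _ ord_inj consistent cls_v0 cls_v1 e_v0v1
  u_before w_after p up pw _.
apply: contraT; rewrite negb_or => /andP[v0_off v1_off].
have last_not : ~~ precedes_edge ord cls v0 v1 (last u p).
  by rewrite pw after_edge_not_precedes.
have [a [b [eab a_prec b_not a_in b_in]]] :=
  path_exit_edge up (before_edge_precedes u_before) last_not.
have off x : x \in u :: p -> x \notin [:: v0; v1].
  by move=> x_in; rewrite !inE negb_or (memPn v0_off) ?(memPn v1_off).
case: acyclic; exact: (leaving_edge_has_cycle e_sym e_irr ord_inj consistent cls_v0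
  cls_v1 e_v0v1 eab (off a a_in) (off b b_in) a_prec b_not).
Qed.
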